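(* Let $A$ be a metric space and let $a:\mathbb{R}^N\times A\to S^N$, $b:\mathbb{R}^N\times A\to\mathbb{R}^N$, $c:\mathbb{R}^N\times A\to\mathbb{R}$ be continuous. For $\alpha\in A$ set $L^\alpha u:=\mathrm{tr}(a(x,\alpha)D^2u)+b(x,\alpha)\cdot Du$ and $\tilde G[u]:=\sup_{\alpha\in A}\{-L^\alpha u+c(x,\alpha)u\}$. Assume: (i) $\tilde F(x,t,p,X)=\sup_{\alpha\in A}\{-\mathrm{tr}(a(x,\alpha)X)-b(x,\alpha)\cdot p+c(x,\alpha)t\}$ is continuous, $c\ge0$, and $\tilde G$ satisfies the Comparison Principle in every bounded open set $\Omega$ (a viscosity subsolution $u$ and supersolution $v$ of $\tilde G=0$ in $\Omega$ with $u\le v$ on $\partial\Omega$ satisfy $u\le v$ in $\Omega$); (ii) $\tilde G$ satisfies the Strong Minimum Principle: any viscosity supersolution of $\tilde G[v]=0$ in $\mathbb{R}^N$ that attains an interior nonpositive minimum is constant; (iii) there exist $R_o\ge0$ and an upper semicontinuous $W:\mathbb{R}^N\to\mathbb{R}$ with $\tilde G[W]\le0$ in the viscosity sense for $|x|>R_o$ and $\lim_{|x|\to\infty}W(x)=-\infty$. Let $v\in LSC(\mathbb{R}^N)$ be a viscosity supersolution of $\tilde G[v]\ge0$ in $\mathbb{R}^N$ such that $\limsup_{|x|\to\infty}\frac{v(x)}{W(x)}\le0$. If either $v\le0$ or $c\equiv0$, then $v$ is constant.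
   Context: $S^N$ denotes the space of real symmetric $N\times N$ matrices. Sub- and supersolutions are meant in the viscosity sense. *)

(* R^N is 'rV[R]_N, S^N is the set of symmetric 'M[R]_N. *)
From HB Require Import structures.
From mathcomp Require Import all_boot all_order all_algebra.
From mathcomp Require Import all_classical all_reals all_analysis.
Set Implicit Arguments. Unset Strict Implicit. Unset Printing Implicit Defensive.
Import Order.TTheory GRing.Theory Num.Theory.
Import numFieldNormedType.Exports.
Local Open Scope classical_set_scope.
Local Open Scope ring_scope.

Section Defs.
Variables (R : realType) (N : nat).

Definition dotv (p q : 'rV[R]_N) : R := \sum_(i < N) p 0 i * q 0 i.
Definition quadf (X : 'M[R]_N) (h : 'rV[R]_N) : R := (h *m X *m h^T) 0 0.
Definition symmx (X : 'M[R]_N) : Prop := X^T = X.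

Definition subjet (v : 'rV[R]_N -> R) (x p : 'rV[R]_N) (X : 'M[R]_N) : Prop :=
  forall e : R, 0 < e -> \forall y \near x,
    v x + dotv p (y - x) + quadf X (y - x) / 2 - e * `|y - x| ^+ 2 <= v y.
Definition superjet (u : 'rV[R]_N -> R) (x p : 'rV[R]_N) (X : 'M[R]_N) : Prop :=
  forall e : R, 0 < e -> \forall y \near x,
    u y <= u x + dotv p (y - x) + quadf X (y - x) / 2 + e * `|y - x| ^+ 2.

Definition usc_within (D : set 'rV[R]_N) (u : 'rV[R]_N -> R) (x : 'rV[R]_N) : Prop :=
  forall e : R, 0 < e -> \forall y \near x, D y -> u y < u x + e.
Definition lsc_within (D : set 'rV[R]_N) (v : 'rV[R]_N -> R) (x : 'rV[R]_N) : Prop :=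
  forall e : R, 0 < e -> \forall y \near x, D y -> v x - e < v y.

Definition oper := 'rV[R]_N -> R -> 'rV[R]_N -> 'M[R]_N -> R.

Definition visc_sub (F : oper) (O : set 'rV[R]_N) (u : 'rV[R]_N -> R) : Prop :=
  (forall x, O x -> usc_within O u x) /\
  (forall x p X, O x -> symmx X -> superjet u x p X -> F x (u x) p X <= 0).
Definition visc_super (F : oper) (O : set 'rV[R]_N) (v : 'rV[R]_N -> R) : Prop :=
  (forall x, O x -> lsc_within O v x) /\
  (forall x p X, O x -> symmx X -> subjet v x p X -> 0 <= F x (v x) p X).

Definition comparison_principle (F : oper) : Prop :=
  forall O : set 'rV[R]_N, open O -> bounded_set O ->
  forall u v : 'rV[R]_N -> R,
    (forall x, closure O x -> usc_within (closure O) u x) ->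
    (forall x, closure O x -> lsc_within (closure O) v x) ->
    visc_sub F O u -> visc_super F O v ->
    (forall x, (closure O `\` O) x -> u x <= v x) ->
    forall x, O x -> u x <= v x.

Definition strong_min_principle (F : oper) : Prop :=
  forall v : 'rV[R]_N -> R, visc_super F setT v ->
    (exists x0, v x0 <= 0 /\ forall x, v x0 <= v x) ->
    forall x y, v x = v y.

Variable A : Type.
Variables (a : 'rV[R]_N -> A -> 'M[R]_N) (b : 'rV[R]_N -> A -> 'rV[R]_N)
  (c : 'rV[R]_N -> A -> R).

Definition Fset (x : 'rV[R]_N) (t : R) (p : 'rV[R]_N) (X : 'M[R]_N) : set R :=
  range (fun al : A => - \tr (a x al *m X) - dotv (b x al) p + c x al * t).

Definition Ftilde : oper := fun x t p X => sup (Fset x t p X).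

End Defs.

(** Choose [r > Ro] so large that [W < 0] for [|x| >= r], and let [m] be the
    minimum of the lower semicontinuous [v] on the ball [|x| <= r].  If
    [v y < m] for some [y] outside the ball, take [eps > 0] with
    [v y < m + eps W y].  Because [c m <= 0] ([m <= 0] when [v <= 0], or
    [c = 0]), [m + eps W] is still a subsolution for [|x| > Ro].  It lies below
    [v] on the sphere [|x| = r], where [eps W < 0], and on a far sphere, where
    [v >= (eps/2) W] and [W -> -oo]; comparison on the annulus between them
    contradicts [v y < m + eps W y].  Hence [v] (or [v - m] when [c = 0])
    attains a nonpositive global minimum, and the strong minimum principle
    makes it constant. *)

From HB Require Import structures.
From mathcomp Require Import all_boot all_order all_algebra.
From mathcomp Require Import all_classical all_reals all_analysis.
From mathcomp Require Import ring lra.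
Import Order.TTheory GRing.Theory Num.Theory.
Import numFieldNormedType.Exports.
Local Open Scope classical_set_scope.
Local Open Scope ring_scope.

Lemma compact_increasing_open_cover (T : topologicalType) (K : set T)
    (U : nat -> set T) :
  compact K -> (forall n, open (U n)) -> (forall n, U n `<=` U n.+1) ->
  K `<=` \bigcup_n U n -> exists n, K `<=` U n.
Proof.
move=> cK oU incU KU.
have incUle m n : (m <= n)%N -> U m `<=` U n.
  elim: n => [|n IH]; first by rewrite leqn0 => /eqP ->.
  rewrite leq_eqVlt => /orP[/eqP -> //|]; rewrite ltnS => /IH mn y /mn.
  exact: incU.
have [x Kx|n _ KUn] :=
  (compact_near_coveringP K).1 cK nat \oo (fun n y => U n y).
  have [n _ Unx] := KU x Kx.
  exists (U n, [set i | (n <= i)%N]); last by move=> [y i] [Uy /incUle]; apply.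
  by split; [move: (oU n); rewrite openE => /(_ x Unx) | exists n].
by exists n; apply: (KUn n) => /=.
Qed.

Section lower_semicontinuous_min.
Context {R : realType} {N : nat} {v : 'rV[R]_N -> R}.
Hypothesis v_lsc : forall x, lsc_within setT v x.

Lemma open_lsc_superlevel (t : R) : open [set y | t < v y].
Proof.
rewrite openE => x /= tx.
have := v_lsc x (v x - t); rewrite subr_gt0 => /(_ tx).
by apply: filterS => y /(_ I); rewrite opprB addrC subrK.
Qed.

Lemma lsc_compact_attains_min (K : set 'rV[R]_N) :
  compact K -> K !=set0 -> exists2 x0, K x0 & forall y, K y -> v x0 <= v y.
Proof.
move=> cK [z Kz].
have cover (f : nat -> R) : (forall n, f n.+1 <= f n) ->
    (forall y, K y -> exists n, f n < v y) ->
    exists n, K `<=` [set y | f n < v y].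
  move=> fdec fK; apply: compact_increasing_open_cover => //.
  - by move=> n; exact: open_lsc_superlevel.
  - by move=> n y /=; exact: le_lt_trans.
  - by move=> y /fK [n fn]; exists n.
have [n0 Kn0] : exists n, K `<=` [set y | - n%:R < v y].
  apply: cover => [n|y _]; first by rewrite lerN2 ler_nat.
  exists (Num.truncn `|v y|).+1; rewrite ltrNl.
  by apply: le_lt_trans (truncnS_gt _); rewrite -normrN; exact: ler_norm.
have infK : has_inf (v @` K).
  by split; [exists (v z), z | exists (- n0%:R) => _ [y Ky <-]; exact/ltW/Kn0].
pose m := inf (v @` K).
have m_le y : K y -> m <= v y by move=> Ky; apply: (ge_inf infK.2); exists y.
suff [x0 Kx0 vx0] : exists2 x0, K x0 & v x0 <= m.
  by exists x0 => // y Ky; apply: le_trans vx0 (m_le y Ky).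
apply: contrapT => nomin.
have m_lt y : K y -> m < v y.
  by move=> Ky; rewrite ltNge; apply/negP => vym; apply: nomin; exists y.
have [n1 Kn1] : exists n, K `<=` [set y | m + n.+1%:R^-1 < v y].
  apply: cover => [n|y /m_lt]; first by rewrite lerD2l lef_pV2 ?posrE ?ler_nat.
  rewrite -subr_gt0 => vym; exists (Num.truncn ((v y - m)^-1)).
  rewrite -ltrBrDl -[X in _ < X]invrK ltf_pV2 ?posrE ?invr_gt0 //.
  exact: truncnS_gt.
have : m + n1.+1%:R^-1 <= m.
  by apply: lb_le_inf; [exists (v z), z | move=> _ [y Ky <-]; exact/ltW/Kn1].
by rewrite gerDl leNgt invr_gt0 ltr0n.
Qed.

End lower_semicontinuous_min.

Section jets.
Context {R : realType} {N : nat}.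

Lemma dotvZl (k : R) (p q : 'rV[R]_N) : dotv (k *: p) q = k * dotv p q.
Proof. by rewrite /dotv mulr_sumr; apply: eq_bigr => i _; rewrite mxE mulrA.
Qed.

Lemma dotvZr (k : R) (p q : 'rV[R]_N) : dotv p (k *: q) = k * dotv p q.
Proof. by rewrite /dotv mulr_sumr; apply: eq_bigr => i _; rewrite mxE mulrCA.
Qed.

Lemma quadfZ (k : R) (X : 'M[R]_N) h : quadf (k *: X) h = k * quadf X h.
Proof. by rewrite /quadf -scalemxAr -scalemxAl mxE. Qed.

Lemma symmxZ (k : R) (X : 'M[R]_N) : symmx X -> symmx (k *: X).
Proof. by rewrite /symmx linearZ /= => ->. Qed.

Lemma usc_within_affine (W : 'rV[R]_N -> R) (k eps : R) (D : set 'rV[R]_N) x :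
  0 < eps -> usc_within setT W x -> usc_within D (fun y => k + eps * W y) x.
Proof.
move=> eps0 hW e e0; move: (hW (e / eps) (divr_gt0 e0 eps0)).
apply: filterS => y /(_ I) Wy _; rewrite -addrA ltrD2l.
by rewrite -(divfK (lt0r_neq0 eps0) e) [e / eps * eps]mulrC -mulrDr ltr_pM2l.
Qed.

Lemma lsc_withinS (D E : set 'rV[R]_N) (v : 'rV[R]_N -> R) x :
  D `<=` E -> lsc_within E v x -> lsc_within D v x.
Proof.
by move=> DE v_lsc e e0; move: (v_lsc e e0); apply: filterS => y vy /DE.
Qed.

Lemma superjet_affine (W : 'rV[R]_N -> R) (k eps : R) x p X :
  0 < eps -> superjet (fun y => k + eps * W y) x p X ->
  superjet W x (eps^-1 *: p) (eps^-1 *: X).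
Proof.
move=> eps0 sj e e0; move: (sj (eps * e) (mulr_gt0 eps0 e0)).
apply: filterS => y h.
rewrite dotvZl quadfZ -(ler_pM2l eps0).
move: h; set d := dotv p _; set q := quadf X _; set n := `|_| ^+ 2 => h.
have -> : eps * (W x + eps^-1 * d + eps^-1 * q / 2 + e * n) =
    eps * W x + d + q / 2 + eps * e * n by field; rewrite gt_eqF.
lra.
Qed.

Lemma subjet_subr (v : 'rV[R]_N -> R) (m : R) x p X :
  subjet (fun y => v y - m) x p X -> subjet v x p X.
Proof. by move=> sj e e0; move: (sj e e0); apply: filterS => y; lra. Qed.

End jets.

Section operator.
Context {R : realType} {N : nat} {A : Type}.
Context {a : 'rV[R]_N -> A -> 'M[R]_N} {b : 'rV[R]_N -> A -> 'rV[R]_N}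
  {c : 'rV[R]_N -> A -> R}.
Local Notation F := (Ftilde a b c).
Hypothesis Fsup : forall x t p X, symmx X -> has_sup (Fset a b c x t p X).

Lemma Ftilde_affine_le0 x t p X (k eps : R) :
  0 < eps -> symmx X -> (forall al, c x al * k <= 0) ->
  F x t (eps^-1 *: p) (eps^-1 *: X) <= 0 -> F x (k + eps * t) p X <= 0.
Proof.
move=> eps0 sX ck Fle0; apply: ge_sup.
  by have [[_ [al _ _]] _] := Fsup x (k + eps * t) p X sX; eexists; exists al.
move=> _ [al _ <-].
have := sup_upper_bound (Fsup x t (eps^-1 *: p) _ (symmxZ eps^-1 _ sX))
  (ex_intro2 _ _ al I erefl).
move=> /le_trans /(_ Fle0); rewrite -scalemxAr mxtraceZ dotvZr => Fal.
have := ck al; set T := \tr _; set D := dotv _ _; set C := c x al => Ck.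
have : eps * (- (eps^-1 * T) - eps^-1 * D + C * t) <= 0.
  by apply: mulr_ge0_le0; [exact: ltW | exact: Fal].
have -> : eps * (- (eps^-1 * T) - eps^-1 * D + C * t) = - T - D + eps * (C * t).
  by field; rewrite gt_eqF.
have -> : - T - D + C * (k + eps * t) = - T - D + eps * (C * t) + C * k by ring.
lra.
Qed.

Lemma visc_sub_affine (O U : set 'rV[R]_N) (W : 'rV[R]_N -> R) (k eps : R) :
  0 < eps -> (forall x al, c x al * k <= 0) ->
  (forall x, usc_within setT W x) -> O `<=` U -> visc_sub F U W -> visc_sub F O (fun x => k + eps * W x).
Proof.
move=> eps0 ck W_usc OU [_ Wsub]; split=> [x _|x p X Ox sX sj].
  exact: usc_within_affine.
apply: Ftilde_affine_le0 => //; apply: Wsub; [exact: OU | exact: symmxZ |].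
exact: superjet_affine sj.
Qed.

Lemma visc_superS (O U : set 'rV[R]_N) (v : 'rV[R]_N -> R) :
  O `<=` U -> visc_super F U v -> visc_super F O v.
Proof.
move=> OU [v_lsc vsuper]; split=> [x Ox|x p X /OU]; last exact: vsuper.
exact: lsc_withinS OU (v_lsc x (OU x Ox)).
Qed.

Lemma Ftilde_c0 (c0 : forall x al, c x al = 0) x t s p X :
  F x t p X = F x s p X.
Proof.
by rewrite /Ftilde /Fset; congr sup; apply/seteqP; split=> _ [al _ <-];
  exists al => //; rewrite !c0 !mul0r.
Qed.

Lemma visc_super_subr (c0 : forall x al, c x al = 0) (m : R)
    {O : set 'rV[R]_N} {v : 'rV[R]_N -> R} :
  visc_super F O v -> visc_super F O (fun y => v y - m).
Proof.
move=> [v_lsc vsuper]; split=> [x Ox e e0|x p X Ox sX sj].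
  by move: (v_lsc x Ox e e0); apply: filterS => y vy /vy; lra.
by rewrite (Ftilde_c0 c0 _ _ (v x)); apply: vsuper => //; exact: subjet_subr sj.
Qed.

End operator.

Section annulus.
Context {R : realType} {N : nat}.

Definition annulus (r1 r2 : R) : set 'rV[R]_N := [set x | r1 < `|x| < r2].

Lemma open_annulus (r1 r2 : R) : open (annulus r1 r2).
Proof.
have -> : annulus r1 r2 =
    Num.norm @^-1` [set s | r1 < s] `&` Num.norm @^-1` [set s | s < r2].
  by apply/seteqP; split=> x; rewrite /annulus /=; [move/andP | case=> -> ->].
by apply: openI; apply: open_comp;
  by [move=> *; exact: norm_continuous | exact: open_gt | exact: open_lt].
Qed.

Lemma bounded_annulus (r1 r2 : R) : bounded_set (annulus r1 r2).
Proof.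
exists r2; split=> [|M r2M x /andP[_ xr2]]; first exact: num_real.
by rewrite /= ltW // (lt_trans xr2 r2M).
Qed.

Lemma annulus_boundary (r1 r2 : R) (x : 'rV[R]_N) :
  (closure (annulus r1 r2) `\` annulus r1 r2) x -> `|x| = r1 \/ `|x| = r2.
Proof.
have closed_shell : closed [set x : 'rV[R]_N | r1 <= `|x| <= r2].
  have -> : [set x : 'rV[R]_N | r1 <= `|x| <= r2] =
      Num.norm @^-1` [set s | r1 <= s] `&` Num.norm @^-1` [set s | s <= r2].
    by apply/seteqP; split=> y /=; [move/andP | case=> -> ->].
  by apply: closedI; apply: preimage_closed;
    by [move=> *; exact: norm_continuous | exact: closed_ge | exact: closed_le].
have : closure (annulus r1 r2) `<=` [set x | r1 <= `|x| <= r2].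
  rewrite [X in _ `<=` X](closure_id _).1 //; apply: closureS => y /andP[h1 h2].
  by rewrite /= !ltW.
move=> sub [/sub /andP[x1 x2]]; rewrite /annulus /= !lt_neqAle x1 x2 !andbT.
by move=> /negP; rewrite negb_and !negbK => /orP[/eqP|/eqP]; [left | right].
Qed.

Lemma compact_norm_le (r : R) : compact [set x : 'rV[R]_N | `|x| <= r].
Proof.
apply: bounded_closed_compact.
  exists r; split=> [|M rM x /= xr]; first exact: num_real.
  by rewrite ltW // (le_lt_trans xr rM).
rewrite (_ : [set x | _] = Num.norm @^-1` [set s | s <= r]) //.
by apply: preimage_closed;
  by [move=> *; exact: norm_continuous | exact: closed_le].
Qed.

End annulus.

Section liouville.
Context {R : realType} {N : nat} {A : Type}.
Context {a : 'rV[R]_N -> A -> 'M[R]_N} {b : 'rV[R]_N -> A -> 'rV[R]_N}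
  {c : 'rV[R]_N -> A -> R} {Ro : R} {W v : 'rV[R]_N -> R}.
Local Notation F := (Ftilde a b c).
Hypothesis Fsup : forall x t p X, symmx X -> has_sup (Fset a b c x t p X).
Hypothesis F_comparison : comparison_principle F.
Hypothesis W_usc : forall x, usc_within setT W x.
Hypothesis W_sub : visc_sub F [set x | Ro < `|x|] W.
Hypothesis W_ninfty : forall M : R, exists r : R, forall x, r < `|x| -> W x < M.
Hypothesis v_lsc : forall x, lsc_within setT v x.
Hypothesis v_super : visc_super F setT v.
Hypothesis v_over_W :
  forall e : R, 0 < e -> exists r : R, forall x, r < `|x| -> v x / W x <= e.

Lemma affine_W_le_v_near_infinity (m eps : R) : 0 < eps ->
  exists r : R, forall x, r < `|x| -> m + eps * W x <= v x.
Proof.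
move=> eps0; have [r1 vW] := v_over_W _ (divr_gt0 eps0 (ltr0Sn R 1)).
have [r2 W_lt] := W_ninfty (- (2 * `|m| / eps)).
exists (Num.max r1 r2) => x; rewrite gt_max => /andP[/vW vWx /W_lt Wx].
have Wx_neg : W x < 0.
  by apply: lt_le_trans Wx _; rewrite oppr_le0 divr_ge0 ?mulr_ge0 // ltW.
have : eps / 2 * W x <= v x.
  by have := ler_wnM2r (ltW Wx_neg) vWx; rewrite divfK ?lt_eqF.
have : eps * W x < - (2 * `|m|).
  by move: Wx; rewrite -(ltr_pM2l eps0) mulrN mulrCA divff ?gt_eqF // mulr1.
by have := ler_norm m; lra.
Qed.

Lemma ball_min_is_global_min (r m : R) : Ro < r ->
  (forall x, `|x| = r -> W x < 0) -> (forall x, `|x| <= r -> m <= v x) ->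
  (forall x al, c x al * m <= 0) -> forall y, m <= v y.
Proof.
move=> Ro_r W_neg v_ball cm y; have [|r_y] := leP `|y| r; first exact: v_ball.
rewrite leNgt; apply/negP => vy_m.
pose eps := (m - v y) / (`|W y| + 1).
have W1_gt0 : 0 < `|W y| + 1 by rewrite ltr_wpDl.
have eps0 : 0 < eps by rewrite divr_gt0 // subr_gt0.
have : v y < m + eps * W y.
  have : eps * `|W y| < m - v y.
    by rewrite /eps mulrAC ltr_pdivrMr // ltr_pM2l ?ltrDl ?subr_gt0.
  have : - (eps * `|W y|) <= eps * W y.
    by rewrite -mulrN ler_pM2l // lerNl -normrN ler_norm.
  lra.
have [r2 W_le_v] := affine_W_le_v_near_infinity m eps eps0.
pose s := Num.max r2 `|y| + 1.
have Ay : annulus r s y.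
  by rewrite /annulus /= r_y /s ltr_pwDr // le_max lexx orbT.
suff : m + eps * W y <= v y by lra.
apply: (F_comparison _ (open_annulus r s) (bounded_annulus r s)
  (fun x => m + eps * W x) v _ _ _ _ _ y Ay).
- by move=> x _; exact: usc_within_affine.
- by move=> x _; exact: lsc_withinS (v_lsc x).
- apply: (visc_sub_affine Fsup _ [set x | Ro < `|x|]) => // x /andP[r_x _].
  exact: lt_trans r_x.
- exact: visc_superS v_super.
- move=> x /annulus_boundary [x_r|x_s].
    have : eps * W x < 0 by rewrite pmulr_rlt0 // W_neg.
    have : m <= v x by apply: v_ball; rewrite x_r.
    lra.
  by apply: W_le_v; rewrite x_s /s ltr_pwDr // le_max lexx.
Qed.

End liouville.

Theorem theorem2p3 (R : realType) (N : nat) (A : pseudoMetricType R)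
  (a : 'rV[R]_N -> A -> 'M[R]_N) (b : 'rV[R]_N -> A -> 'rV[R]_N)
  (c : 'rV[R]_N -> A -> R) (Ro : R) (W : 'rV[R]_N -> R) (v : 'rV[R]_N -> R) :
  hausdorff_space A ->
  (forall x al, symmx (a x al)) ->
  continuous (fun z : 'rV[R]_N * A => a z.1 z.2) ->
  continuous (fun z : 'rV[R]_N * A => b z.1 z.2) ->
  continuous (fun z : 'rV[R]_N * A => c z.1 z.2) ->
  (* (i) *)
  (forall x t p X, symmx X -> has_sup (Fset a b c x t p X)) ->
  {within [set z : 'rV[R]_N * R * 'rV[R]_N * 'M[R]_N | symmx z.2],
     continuous (fun z : 'rV[R]_N * R * 'rV[R]_N * 'M[R]_N =>
                   Ftilde a b c z.1.1.1 z.1.1.2 z.1.2 z.2)} ->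
  (forall x al, 0 <= c x al) ->
  comparison_principle (Ftilde a b c) ->
  (* (ii) *)
  strong_min_principle (Ftilde a b c) ->
  (* (iii) *)
  0 <= Ro ->
  (forall x, usc_within setT W x) ->
  visc_sub (Ftilde a b c) [set x | Ro < `|x|] W ->
  (forall M : R, exists Rm : R, forall x, Rm < `|x| -> W x < M) ->
  (* v *)
  (forall x, lsc_within setT v x) ->
  visc_super (Ftilde a b c) setT v ->
  (forall e : R, 0 < e -> exists Rm : R, forall x, Rm < `|x| -> v x / W x <= e) ->
  ((forall x, v x <= 0) \/ (forall x al, c x al = 0)) ->
  forall x y, v x = v y.
Proof.
(* The continuity and Hausdorff hypotheses only serve to justify the comparison
   and strong minimum principles, which are assumed outright. *)
move=> _ _ _ _ _ Fsup _ c_ge0 F_comparison F_smp Ro_ge0 W_usc W_sub W_ninfty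
  v_lsc v_super v_over_W v_le0_or_c0.
have [rW W_neg] := W_ninfty 0.
pose r := Num.max rW Ro + 1.
have Ro_r : Ro < r by rewrite ltr_pwDr // le_max lexx orbT.
have ball0 : [set x : 'rV[R]_N | `|x| <= r] 0.
  by rewrite /= normr0 ltW // (le_lt_trans Ro_ge0).
have [x0 x0_ball x0_min] :=
  lsc_compact_attains_min v_lsc _ (compact_norm_le r) (ex_intro _ 0 ball0).
have c_vx0 x al : c x al * v x0 <= 0.
  case: v_le0_or_c0 => [v_le0|c0]; last by rewrite c0 mul0r.
  exact: mulr_ge0_le0 (c_ge0 x al) (v_le0 x0).
have v_ge_vx0 : forall y, v x0 <= v y.
  apply: (ball_min_is_global_min Fsup F_comparison W_usc W_sub W_ninfty v_lsc
    v_super v_over_W _ _ Ro_r) => // x x_r.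
  by apply: W_neg; rewrite x_r ltr_pwDr // le_max lexx.
case: v_le0_or_c0 => [v_le0|c0] x y.
  by apply: F_smp v_super _ x y; exists x0.
apply: (addIr (- v x0)); apply: F_smp (visc_super_subr c0 (v x0) v_super) _ x y.
by exists x0; rewrite subrr; split=> // z; rewrite subr_ge0.
Qed.
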